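(* Let $G$ be a nontrivial finite $p$-group of nilpotency class $c$. In the bar code of the degree-$2$ lower central persistence module of $G$, every interval $[a,b]$ with $a<b$ has $a=1$. Equivalently, for every $2\le k\le c-1$... more precisely, for every $1\le k<l\le c$ the image of $H_2(Q_k,\mathbb F_p)\to H_2(Q_l,\mathbb F_p)$ equals the image of $H_2(G,\mathbb F_p)\to H_2(Q_l,\mathbb F_p)$.
   Context: Lower central series: $L_1(G)=G$, $L_{i+1}(G)=[L_i(G),G]$, so $L_{c+1}(G)=1\ne L_c(G)$. For $k=1,\dots,c$ set $Q_k=G/L_{c+2-k}(G)$ (so $Q_1=G$, $Q_c=G/L_2(G)$). The degree-$n$ lower central persistence module of $G$ is the sequence of $\mathbb F_p$-linear maps $V_1\to V_2\to\cdots\to V_c$ with $V_k=H_n(Q_k,\mathbb F_p)$ and maps induced by the natural surjections $Q_k\to Q_{k+1}$. Such a module decomposes, uniquely up to isomorphism and order, as a direct sum of interval modules $I[a,b]$ ($1\le a\le b\le c$), where $I[a,b]$ has $\mathbb F_p$ in positions $a,\dots,b$, identity maps between consecutive positions in this range, and $0$ elsewhere. The bar code is the multiset of intervals $[a,b]$ occurring in this decomposition. *)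

From HB Require Import structures.
From mathcomp Require Import all_boot all_order all_algebra all_fingroup all_solvable.
Set Implicit Arguments. Unset Strict Implicit. Unset Printing Implicit Defensive.
Import GRing.Theory.
Local Open Scope ring_scope.

(* Bar-complex chains of a finite group A (a subgroup of the ambient finGroupType T)
   with trivial coefficients in a ring R: an n-chain is a formal R-linear
   combination of n-tuples of elements of A, represented as a finitely supported
   function T^n -> R vanishing outside A^n. *)

Definition is_chain2 (R : ringType) (T : finGroupType) (A : {set T})
  (c : {ffun T * T -> R}) : Prop := forall u, u \notin setX A A -> c u = 0.

Definition is_chain3 (R : ringType) (T : finGroupType) (A : {set T})
  (c : {ffun T * T * T -> R}) : Prop :=
  forall u, u \notin setX (setX A A) A -> c u = 0.

Definition bd2 (R : ringType) (T : finGroupType) (A : {set T})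
  (c : {ffun T * T -> R}) : {ffun T -> R} :=
  [ffun x => \sum_(u in setX A A)
     c u * ((x == u.2)%:R - (x == (u.1 * u.2)%g)%:R + (x == u.1)%:R)].

Definition bd3 (R : ringType) (T : finGroupType) (A : {set T})
  (c : {ffun T * T * T -> R}) : {ffun T * T -> R} :=
  [ffun x => \sum_(u in setX (setX A A) A)
     c u * ((x == (u.1.2, u.2))%:R - (x == ((u.1.1 * u.1.2)%g, u.2))%:R
            + (x == (u.1.1, (u.1.2 * u.2)%g))%:R - (x == (u.1.1, u.1.2))%:R)].

Definition is_cycle2 (R : ringType) (T : finGroupType) (A : {set T})
  (c : {ffun T * T -> R}) : Prop := is_chain2 A c /\ bd2 A c = 0.

Definition is_boundary2 (R : ringType) (T : finGroupType) (A : {set T})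
  (c : {ffun T * T -> R}) : Prop :=
  exists e : {ffun T * T * T -> R}, is_chain3 A e /\ c = bd3 A e.

Definition push2 (R : ringType) (T T' : finGroupType) (f : T -> T')
  (c : {ffun T * T -> R}) : {ffun T' * T' -> R} :=
  [ffun v => \sum_(u | (f u.1, f u.2) == v) c u].

(* im (H_2(A1) -> H_2(B) induced by f1)  is contained in
   im (H_2(A2) -> H_2(B) induced by f2). *)
Definition H2_image_sub (R : ringType) (T1 T2 T3 : finGroupType)
  (A1 : {set T1}) (f1 : T1 -> T3) (A2 : {set T2}) (f2 : T2 -> T3)
  (B : {set T3}) : Prop :=
  forall z, is_cycle2 A1 z ->
    exists w, is_cycle2 A2 w /\
      is_boundary2 B (push2 (R:=R) f1 z - push2 f2 w).

Definition H2_image_eq (R : ringType) (T1 T2 T3 : finGroupType)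
  (A1 : {set T1}) (f1 : T1 -> T3) (A2 : {set T2}) (f2 : T2 -> T3)
  (B : {set T3}) : Prop :=
  H2_image_sub R A1 f1 A2 f2 B /\ H2_image_sub R A2 f2 A1 f1 B.

Definition qmap (gT : finGroupType) (M N : {set gT}) (C : coset_of M)
  : coset_of N := coset N (repr C).

(* Q_k = G / L_{c+2-k}(G), c = nilpotency class *)
Definition Qsub (gT : finGroupType) (G : {group gT}) (k : nat) : {group gT} :=
  'L_((nil_class G).+2 - k)(G)%G.

From HB Require Import structures.
From mathcomp Require Import all_boot all_order all_algebra all_fingroup all_solvable.
From mathcomp Require Import ring zify.
Set Implicit Arguments. Unset Strict Implicit. Unset Printing Implicit Defensive.
Import GRing.Theory.
Local Open Scope ring_scope.

(* Since G -> G/M factors through G/N when N <= M, the image of H_2(G) in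
   H_2(G/M) lies in that of H_2(G/N).  Conversely, lift a 2-cycle z of G/N to G
   along the coset representatives: the boundary of the lift is minus the sum of
   z(a,b) ([n(a,b)] - [1]), where n(a,b) = repr(ab)^-1 repr(a) repr(b) in N is the
   factor set of the extension.  Modulo boundaries of 2-chains of G that become
   boundaries in G/M, x |-> [x] - [1] is a homomorphism on M that is invariant
   under conjugation by G, so it vanishes on [M, G].  Hence if N <= [M, G] the
   lift can be corrected to a 2-cycle of G with the same image as z in H_2(G/M).
   For the lower central series, L_{c+2-k} <= [L_{c+2-l}, G] when k < l. *)

Section ZmodClosedProp.
Variable V : zmodType.

Record zmod_closed_prop (P : V -> Prop) : Prop := ZmodClosedProp {
  rprop0 : P 0;
  rpropB : forall a b, P a -> P b -> P (a - b) }.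

Variables (P : V -> Prop) (closedP : zmod_closed_prop P).

Lemma rpropN a : P a -> P (- a).
Proof. by move=> Pa; rewrite -sub0r; exact: (rpropB closedP (rprop0 closedP) Pa). Qed.

Lemma rpropD a b : P a -> P b -> P (a + b).
Proof. by move=> Pa Pb; rewrite -[b]opprK; apply/(rpropB closedP)/rpropN. Qed.

Lemma rprop_sum I r (Q : pred I) (F : I -> V) :
  (forall i, Q i -> P (F i)) -> P (\sum_(i <- r | Q i) F i).
Proof.
move=> PF; elim/big_rec: _ => [|i x Qi Px]; first exact: (rprop0 closedP).
by apply/rpropD/Px/PF.
Qed.

End ZmodClosedProp.

Section Dirac.
Variable R : comNzRingType.

Definition dirac (T : finType) (x : T) (r : R) : {ffun T -> R} :=
  [ffun t => r * (t == x)%:R].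

Lemma ffun_dirac_sum (T : finType) (c : {ffun T -> R}) : c = \sum_x dirac x (c x).
Proof.
apply/ffunP=> t; rewrite sum_ffunE (bigD1 t) //= big1 ?addr0 => [|x xt].
  by rewrite ffunE eqxx mulr1.
by rewrite ffunE eq_sym (negbTE xt) mulr0.
Qed.

Definition push (T T' : finType) (f : T -> T') (c : {ffun T -> R}) : {ffun T' -> R} :=
  [ffun v => \sum_(u | f u == v) c u].

Section Push.
Variables (T T' : finType) (f : T -> T').

Lemma push_is_zmod_morphism : zmod_morphism (push f).
Proof.
by move=> a b; apply/ffunP=> v; rewrite !ffunE -sumrB; apply: eq_bigr => u _; rewrite !ffunE.
Qed.

HB.instance Definition _ := GRing.isZmodMorphism.Build _ _ (push f) push_is_zmod_morphism.

Lemma push_dirac x r : push f (dirac x r) = dirac (f x) r.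
Proof.
apply/ffunP=> v; rewrite !ffunE big_mkcond (bigD1 x) //= big1 => [|u ux].
  by rewrite ffunE eqxx mulr1 addr0 eq_sym; case: eqP; rewrite ?mulr1 ?mulr0.
by rewrite ffunE (negbTE ux) mulr0 if_same.
Qed.

End Push.

Lemma push_comp (T T' T'' : finType) (f : T -> T') (g : T' -> T'') c :
  push g (push f c) = push (g \o f) c.
Proof.
rewrite [c]ffun_dirac_sum !raddf_sum /=; apply: eq_bigr => x _.
by rewrite !push_dirac.
Qed.

End Dirac.

Section BarComplex.
Variables (R : comNzRingType) (T : finGroupType) (A : {group T}).

Lemma bd2_is_zmod_morphism : zmod_morphism (@bd2 R T A).
Proof.
move=> a b; apply/ffunP=> x; rewrite !ffunE -sumrB.
by apply: eq_bigr => u _; rewrite !ffunE mulrBl.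
Qed.

HB.instance Definition _ := GRing.isZmodMorphism.Build _ _ (@bd2 R T A) bd2_is_zmod_morphism.

Lemma bd3_is_zmod_morphism : zmod_morphism (@bd3 R T A).
Proof.
move=> a b; apply/ffunP=> x; rewrite !ffunE -sumrB.
by apply: eq_bigr => u _; rewrite !ffunE mulrBl.
Qed.

HB.instance Definition _ := GRing.isZmodMorphism.Build _ _ (@bd3 R T A) bd3_is_zmod_morphism.

Lemma bd2_dirac x y (r : R) : x \in A -> y \in A ->
  bd2 A (dirac (x, y) r) = dirac y r - dirac (x * y)%g r + dirac x r.
Proof.
move=> xA yA; apply/ffunP=> t; rewrite !ffunE (bigD1 (x, y)) ?inE ?xA ?yA //=.
rewrite big1 => [|u /andP[_ uxy]]; last by rewrite ffunE (negbTE uxy) mulr0 mul0r.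
by rewrite ffunE eqxx addr0 mulr1 mulrDr mulrBr.
Qed.

Lemma bd3_dirac x y z (r : R) : x \in A -> y \in A -> z \in A ->
  bd3 A (dirac (x, y, z) r) =
    dirac (y, z) r - dirac ((x * y)%g, z) r + dirac (x, (y * z)%g) r - dirac (x, y) r.
Proof.
move=> xA yA zA; apply/ffunP=> t; rewrite !ffunE (bigD1 (x, y, z)) ?inE ?xA ?yA ?zA //=.
rewrite big1 => [|u /andP[_ uxyz]]; last by rewrite ffunE (negbTE uxyz) mulr0 mul0r.
by rewrite ffunE eqxx addr0 mulr1 mulrBr mulrDr mulrBr.
Qed.

Lemma chain2_zmod_closed : zmod_closed_prop (@is_chain2 R T A).
Proof.
by split=> [u _ | a b ca cb u uA]; rewrite !ffunE ?ca ?cb ?subrr.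
Qed.

Lemma chain3_zmod_closed : zmod_closed_prop (@is_chain3 R T A).
Proof.
by split=> [u _ | a b ca cb u uA]; rewrite !ffunE ?ca ?cb ?subrr.
Qed.

Lemma chain2_dirac x y (r : R) : x \in A -> y \in A -> is_chain2 A (dirac (x, y) r).
Proof.
move=> xA yA u uA; rewrite ffunE; case: eqP => [eu|]; last by rewrite mulr0.
by move: uA; rewrite eu !inE xA yA.
Qed.

Lemma chain3_dirac x y z (r : R) : x \in A -> y \in A -> z \in A ->
  is_chain3 A (dirac (x, y, z) r).
Proof.
move=> xA yA zA u uA; rewrite ffunE; case: eqP => [eu|]; last by rewrite mulr0.
by move: uA; rewrite eu !inE xA yA zA.
Qed.

Lemma chain2_dirac_sum (c : {ffun T * T -> R}) :
  is_chain2 A c -> c = \sum_(u in setX A A) dirac u (c u).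
Proof.
move=> cA; rewrite {1}[c]ffun_dirac_sum (bigID (mem (setX A A))) /=.
by rewrite [X in _ + X]big1 ?addr0 // => u /cA ->; apply/ffunP=> t; rewrite !ffunE mul0r.
Qed.

Lemma boundary2_zmod_closed : zmod_closed_prop (@is_boundary2 R T A).
Proof.
split=> [|_ _ [a [ca ->]] [b [cb ->]]]; last first.
  by exists (a - b); rewrite raddfB; split=> //; exact: (rpropB chain3_zmod_closed ca cb).
by exists 0; rewrite raddf0; split=> //; exact: (rprop0 chain3_zmod_closed).
Qed.

Lemma boundary2_bd3_dirac x y z (r : R) : x \in A -> y \in A -> z \in A ->
  is_boundary2 A (bd3 A (dirac (x, y, z) r)).
Proof. by move=> xA yA zA; exists (dirac (x, y, z) r); split=> //; apply: chain3_dirac. Qed.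

Lemma boundary2_dirac1l x (r : R) :
  x \in A -> is_boundary2 A (dirac (1, x)%g r - dirac (1, 1)%g r).
Proof.
move=> xA; have := boundary2_bd3_dirac r (group1 A) (group1 A) xA.
by rewrite bd3_dirac ?group1 // !mul1g subrr add0r.
Qed.

Lemma boundary2_dirac1r x (r : R) :
  x \in A -> is_boundary2 A (dirac (x, 1)%g r - dirac (1, 1)%g r).
Proof.
move=> xA; have := boundary2_bd3_dirac r xA (group1 A) (group1 A).
move/(rpropN boundary2_zmod_closed).
by rewrite bd3_dirac ?group1 // !mulg1 addrK opprB.
Qed.

End BarComplex.

Section Push2.
Variables (R : comNzRingType) (T T' : finGroupType) (f : T -> T').

HB.instance Definition _ := GRing.isZmodMorphism.Build _ _ (@push2 R T T' f)
  (push_is_zmod_morphism (fun u => (f u.1, f u.2))).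

Lemma push2_dirac x y (r : R) : push2 f (dirac (x, y) r) = dirac (f x, f y) r.
Proof. exact: push_dirac. Qed.

Lemma push2_comp (T'' : finGroupType) (g : T' -> T'') (c : {ffun T * T -> R}) :
  push2 g (push2 f c) = push2 (g \o f) c.
Proof. exact: push_comp. Qed.

Variables (A : {group T}) (c : {ffun T * T -> R}).
Hypothesis cA : is_chain2 A c.

Lemma push2_dirac_sum : push2 f c = \sum_(u in setX A A) dirac (f u.1, f u.2) (c u).
Proof.
rewrite {1}(chain2_dirac_sum cA) raddf_sum; apply: eq_bigr => -[x y] _.
exact: push2_dirac.
Qed.

Variable B : {group T'}.
Hypothesis fAB : {in A, forall x, f x \in B}.

Lemma chain2_push2 : is_chain2 B (push2 f c).
Proof.
rewrite push2_dirac_sum; apply: (rprop_sum (chain2_zmod_closed _ _)) => u.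
by rewrite inE => /andP[u1 u2]; apply: chain2_dirac; apply: fAB.
Qed.

Lemma bd2_push2 : {in A &, {morph f : x y / (x * y)%g}} ->
  bd2 B (push2 f c) = push f (bd2 A c).
Proof.
move=> fM; rewrite push2_dirac_sum {2}(chain2_dirac_sum cA) !raddf_sum /=.
apply: eq_bigr => -[x y]; rewrite inE => /andP[xA yA] /=.
by rewrite !bd2_dirac ?fAB // !raddfD !raddfN /= !push_dirac fM.
Qed.

End Push2.

Lemma eq_in_push2 (R : comNzRingType) (T T' : finGroupType) (A : {group T})
    (f g : T -> T') (c : {ffun T * T -> R}) :
  is_chain2 A c -> {in A, f =1 g} -> push2 f c = push2 g c.
Proof.
move=> cA fg; rewrite !(push2_dirac_sum _ cA); apply: eq_bigr => -[x y].
by rewrite inE => /andP[xA yA]; rewrite /= !fg.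
Qed.

Lemma qmap_coset (gT : finGroupType) (N M : {group gT}) x :
  (N \subset M)%g -> x \in 'N(N)%g -> x \in 'N(M)%g -> qmap M (coset N x) = coset M x.
Proof.
move=> sNM xNN xNM; rewrite /qmap.
have := mem_repr_coset (coset N x); rewrite val_coset // => /rcosetP[n nN ->].
have nM := subsetP sNM n nN.
by rewrite morphM ?(subsetP (normG M) _ nM) //= coset_id // mul1g.
Qed.

Section Lift.
Variables (R : comNzRingType) (gT : finGroupType) (G N : {group gT}).
Hypothesis nNG : (N <| G)%g.

Local Notation H := (G / N)%g.

Lemma repr_quotient (a : coset_of N) : a \in H -> repr a \in G.
Proof.
move=> aH; rewrite -(quotientGK nNG); apply: mem_morphpre; first exact: repr_coset_norm.
by rewrite /= coset_reprK.
Qed.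

Definition repr_factor (a b : coset_of N) : gT :=
  ((repr (a * b))^-1 * (repr a * repr b))%g.

Lemma repr_factor_mem a b : a \in H -> b \in H -> repr_factor a b \in N.
Proof.
move=> aH bH; apply: coset_idr; first by rewrite !groupM ?groupV ?repr_coset_norm.
rewrite !(morphM, morphV) ?groupM ?groupV ?repr_coset_norm //=.
by rewrite !coset_reprK (coset_reprK (a * b)%g) mulVg.
Qed.

(* The [1|1] terms make the boundary of the lift a combination of the [n] - [1],
   without using that the coefficients of z sum to zero. *)
Definition lift2 (z : {ffun coset_of N * coset_of N -> R}) : {ffun gT * gT -> R} :=
  \sum_(u in setX H H)
    (dirac (repr u.1, repr u.2) (z u)
     - dirac (repr (u.1 * u.2)%g, repr_factor u.1 u.2) (z u) + dirac (1, 1)%g (z u)).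

Variable z : {ffun coset_of N * coset_of N -> R}.

Lemma chain2_lift2 : is_chain2 G (lift2 z).
Proof.
have cl := chain2_zmod_closed R G.
apply: (rprop_sum cl) => -[a b]; rewrite inE => /andP[/= aH /= bH].
have abH : (a * b)%g \in H by rewrite groupM.
have nG : repr_factor a b \in G by apply: subsetP (normal_sub nNG) _ (repr_factor_mem aH bH).
apply: (rpropD cl); first apply: (rpropB cl).
all: by apply: chain2_dirac; rewrite ?group1 ?repr_quotient ?(repr_quotient abH).
Qed.

Lemma bd2_lift2 : is_chain2 H z ->
  bd2 G (lift2 z) = push (fun a : coset_of N => repr a) (bd2 H z)
    - \sum_(u in setX H H) (dirac (repr_factor u.1 u.2) (z u) - dirac 1%g (z u)).
Proof.
move=> zH; rewrite [in bd2 H z](chain2_dirac_sum zH) /lift2 !raddf_sum -big_split /=.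
apply: eq_bigr => -[a b]; rewrite inE => /andP[/= aH /= bH].
have abH : (a * b)%g \in H by rewrite groupM.
have nG : repr_factor a b \in G by apply: subsetP (normal_sub nNG) _ (repr_factor_mem aH bH).
rewrite !raddfD !raddfN /= !bd2_dirac ?group1 ?repr_quotient ?(repr_quotient abH) //.
rewrite !raddfD !raddfN /= !push_dirac.
rewrite /repr_factor mulVKg mulg1.
by apply/ffunP=> t; rewrite !ffunE; ring.
Qed.

Lemma push2_lift2 (M : {group gT}) : (N \subset M)%g -> is_chain2 H z ->
  push2 (coset M) (lift2 z) = push2 (qmap M) z
    - \sum_(u in setX H H) (dirac (qmap M (u.1 * u.2)%g, 1)%g (z u) - dirac (1, 1)%g (z u)).
Proof.
move=> sNM zH; rewrite (push2_dirac_sum _ zH) raddf_sum -sumrB /=.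
apply: eq_bigr => -[a b]; rewrite inE => /andP[/= aH /= bH].
rewrite !raddfD !raddfN /= !push2_dirac morph1.
rewrite (coset_id (subsetP sNM _ (repr_factor_mem aH bH))).
by apply/ffunP=> t; rewrite /qmap !ffunE; ring.
Qed.

End Lift.

Section CommutatorBoundaries.
Variables (R : comNzRingType) (gT : finGroupType) (G M : {group gT}).
Hypothesis nMG : (M <| G)%g.

Definition bd_of_qnull (c : {ffun gT -> R}) : Prop :=
  exists v, [/\ is_chain2 G v, bd2 G v = c & is_boundary2 (G / M)%g (push2 (coset M) v)].

Lemma bd_of_qnull_zmod_closed : zmod_closed_prop bd_of_qnull.
Proof.
split=> [|_ _ [a [aG <- ba]] [b [bG <- bb]]].
  exists 0; rewrite !raddf0; split=> //; first exact: (rprop0 (chain2_zmod_closed R G)).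
  exact: (rprop0 (boundary2_zmod_closed R _)).
exists (a - b); rewrite !raddfB; split=> //.
  exact: (rpropB (chain2_zmod_closed R G) aG bG).
exact: (rpropB (boundary2_zmod_closed R _) ba bb).
Qed.

Variable r : R.
Local Notation d x := (dirac x r).

Lemma bd_of_qnull_mul x y : x \in M -> y \in M ->
  bd_of_qnull (d x + d y - d (x * y)%g - d 1%g).
Proof.
move=> xM yM; have [xG yG] := (subsetP (normal_sub nMG) x xM, subsetP (normal_sub nMG) y yM).
exists (d (x, y) - d (1, 1)%g); split.
- by apply: (rpropB (chain2_zmod_closed R G)); apply: chain2_dirac; rewrite ?group1.
- rewrite raddfB /= !bd2_dirac ?group1 //.
  by apply/ffunP=> t; rewrite !ffunE mulg1; ring.
rewrite raddfB /= !push2_dirac !coset_id ?group1 // subrr.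
exact: (rprop0 (boundary2_zmod_closed R _)).
Qed.

Lemma bd_of_qnull_conj y g : y \in M -> g \in G -> bd_of_qnull (d y - d (y ^ g)%g).
Proof.
move=> yM gG; have sMG := subsetP (normal_sub nMG); have yG := sMG y yM.
have ygM : (y ^ g)%g \in M by rewrite memJ_norm ?(subsetP (normal_norm nMG)).
have ygG := sMG _ ygM.
exists (d (y, g) - d (g, y ^ g)%g); split.
- by apply: (rpropB (chain2_zmod_closed R G)); apply: chain2_dirac.
- rewrite raddfB /= !bd2_dirac // -conjgC.
  by apply/ffunP=> t; rewrite !ffunE; ring.
rewrite raddfB /= !push2_dirac (coset_id yM) (coset_id ygM).
have gK : coset M g \in (G / M)%g by apply: mem_quotient.
have -> : d (1, coset M g)%g - d (coset M g, 1)%g =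
    (d (1, coset M g)%g - d (1, 1)%g) - (d (coset M g, 1)%g - d (1, 1)%g).
  by apply/ffunP=> t; rewrite !ffunE; ring.
apply: (rpropB (boundary2_zmod_closed R _)).
  exact: boundary2_dirac1l.
exact: boundary2_dirac1r.
Qed.

Lemma bd_of_qnull_commg y g : y \in M -> g \in G -> bd_of_qnull (d [~ y, g]%g - d 1%g).
Proof.
move=> yM gG; have cl := bd_of_qnull_zmod_closed.
have ygM : (y ^ g)%g \in M by rewrite memJ_norm ?(subsetP (normal_norm nMG)).
have yVM : (y^-1)%g \in M by rewrite groupV.
have h1 := bd_of_qnull_mul yVM ygM.
have h2 := bd_of_qnull_mul yVM yM; rewrite mulVg in h2.
have h3 := bd_of_qnull_conj yM gG.
have -> : d [~ y, g]%g - d 1%g =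
    (d y^-1%g + d y - d 1%g - d 1%g) - (d y - d (y ^ g)%g)
    - (d y^-1%g + d (y ^ g)%g - d [~ y, g]%g - d 1%g).
  by apply/ffunP=> t; rewrite !ffunE; ring.
by apply: (rpropB cl); first apply: (rpropB cl).
Qed.

Lemma bd_of_qnull_comm n : n \in [~: M, G]%g -> bd_of_qnull (d n - d 1%g).
Proof.
move=> /gen_prodgP[k [c cMG ->]]; have cl := bd_of_qnull_zmod_closed.
pose P x := x \in M /\ bd_of_qnull (d x - d 1%g).
suff [] : P (\prod_i c i)%g by [].
apply: (big_ind P) => [|x y [xM Sx] [yM Sy] | i _].
- by split; rewrite ?group1 // subrr; exact: (rprop0 cl).
- split; first by rewrite groupM.
  have -> : d (x * y)%g - d 1%g =
      (d x - d 1%g) + (d y - d 1%g) - (d x + d y - d (x * y)%g - d 1%g).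
    by apply/ffunP=> t; rewrite !ffunE; ring.
  by apply: (rpropB cl); [apply: (rpropD cl) | apply: bd_of_qnull_mul].
have /imset2P[y g yM gG ->] := cMG i.
split; last exact: bd_of_qnull_commg.
by rewrite commgEl groupM ?groupV // memJ_norm ?(subsetP (normal_norm nMG)).
Qed.

End CommutatorBoundaries.

Section QuotientImages.
Variables (R : comNzRingType) (gT : finGroupType) (G N M : {group gT}).
Hypotheses (nNG : (N <| G)%g) (nMG : (M <| G)%g) (sNMG : (N \subset [~: M, G])%g).

Local Notation H := (G / N)%g.
Local Notation K := (G / M)%g.

Lemma sub_normal_commg : (N \subset M)%g.
Proof. by apply: subset_trans sNMG _; rewrite commg_subl normal_norm. Qed.

Lemma H2_image_sub_group : H2_image_sub R G (coset M) H (qmap M) K.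
Proof.
move=> w [wG wcyc]; exists (push2 (coset N) w).
have nNG' := subsetP (normal_norm nNG); have nMG' := subsetP (normal_norm nMG).
have wNH : {in G, forall x, coset N x \in H} by move=> x; apply: mem_quotient.
split; first split.
- exact: (chain2_push2 wG wNH).
- by rewrite (bd2_push2 wG wNH) ?wcyc ?raddf0 // => x y xG yG; rewrite morphM ?nNG'.
rewrite push2_comp (eq_in_push2 (g := coset M) wG) ?subrr => [|x xG].
  exact: (rprop0 (boundary2_zmod_closed R _)).
by rewrite /= qmap_coset ?nNG' ?nMG' ?sub_normal_commg.
Qed.

Lemma H2_image_sub_quotient : H2_image_sub R H (qmap M) G (coset M) K.
Proof.
move=> z [zH zcyc].
pose c := \sum_(u in setX H H) (dirac (repr_factor u.1 u.2) (z u) - dirac 1%g (z u)).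
have [v [vG vbd vK]] : bd_of_qnull G M c.
  apply: (rprop_sum (bd_of_qnull_zmod_closed R G M)) => -[a b] /=.
  rewrite inE => /andP[/= aH bH].
  by apply: bd_of_qnull_comm => //; exact: (subsetP sNMG _ (repr_factor_mem aH bH)).
exists (lift2 G z + v); split; first split.
- exact: (rpropD (chain2_zmod_closed R G) (chain2_lift2 nNG z) vG).
- by rewrite raddfD /= (bd2_lift2 nNG zH) zcyc raddf0 vbd sub0r addNr.
rewrite raddfD /= (push2_lift2 sub_normal_commg zH) opprD addrA subKr.
apply: (rpropB (boundary2_zmod_closed R _)) vK.
apply: (rprop_sum (boundary2_zmod_closed R _)) => -[a b].
rewrite inE => /andP[/= aH bH]; apply: boundary2_dirac1r.
by rewrite mem_quotient // repr_quotient // groupM.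
Qed.

End QuotientImages.

Lemma lcn_sub_commg (gT : finGroupType) (G : {group gT}) m n :
  (0 < m < n)%N -> ('L_n(G) \subset [~: 'L_m(G), G])%g.
Proof. by case: m => // m /andP[_ lt_mn]; rewrite -lcnSn lcn_sub_leq. Qed.

Local Close Scope ring_scope.

Theorem proposition3 (p : nat) (gT : finGroupType) (G : {group gT}) :
  prime p -> (pgroup p G) -> G :!=: 1%g ->
  forall k l : nat, 1 <= k -> k < l -> l <= nil_class G ->
    H2_image_eq 'F_p
      (G / Qsub G k)%g (@qmap gT (Qsub G k) (Qsub G l))
      G (coset (Qsub G l))
      (G / Qsub G l)%g.
Proof.
move=> _ _ _ k l _ lt_kl l_le_c.
have sNMG : (Qsub G k \subset [~: Qsub G l, G])%g.
  by apply: lcn_sub_commg; apply/andP; split; lia.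
split; first exact: H2_image_sub_quotient (lcn_normal _ _) (lcn_normal _ _) sNMG.
exact: H2_image_sub_group (lcn_normal _ _) (lcn_normal _ _) sNMG.
Qed.
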